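(* For every integer $n \geq 1$, the number of three-candidate ballot sequences of length $n$ with matching parity equals the $n$-th Riordan number $R(n)$.
   Context: A three-candidate ballot sequence of length $n$ is a word $b_1\cdots b_n$ with $b_i\in\{A,B,C\}$ such that in every prefix $b_1\cdots b_k$ ($1\le k\le n$) the number of $A$'s is at least the number of $B$'s, which is at least the number of $C$'s. It has matching parity if the numbers of $A$'s, $B$'s and $C$'s in the whole word are all congruent modulo $2$. $R(n)$ is the number of Riordan paths of length $n$: lattice paths from $(0,0)$ to $(n,0)$ with steps $U=(1,1)$, $F=(1,0)$, $D=(1,-1)$ that never go below the $x$-axis and have no flat step $F$ on the $x$-axis. *)

From HB Require Import structures.
From mathcomp Require Import all_boot.
Set Implicit Arguments. Unset Strict Implicit. Unset Printing Implicit Defensive.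

Inductive cand := cA | cB | cC.
Definition cand_eqb (x y : cand) : bool :=
  match x, y with cA, cA | cB, cB | cC, cC => true | _, _ => false end.
Lemma cand_eqP : Equality.axiom cand_eqb.
Proof. by case; case; constructor. Qed.
HB.instance Definition _ := hasDecEq.Build cand cand_eqP.
Definition cand_nat (c : cand) : nat := match c with cA => 0 | cB => 1 | cC => 2 end.
Definition nat_cand (n : nat) : cand := match n with 0 => cA | 1 => cB | _ => cC end.
Lemma cand_natK : cancel cand_nat nat_cand. Proof. by case. Qed.
HB.instance Definition _ := Countable.copy cand (can_type cand_natK).
Lemma cand_enumP : Finite.axiom [:: cA; cB; cC]. Proof. by case. Qed.
HB.instance Definition _ := isFinite.Build cand cand_enumP.

Definition pcount {T : eqType} (x : T) (k : nat) (s : seq T) : nat :=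
  count_mem x (take k s).

Definition ballot (s : seq cand) : bool :=
  [forall k : 'I_(size s).+1,
     (pcount cB k s <= pcount cA k s) && (pcount cC k s <= pcount cB k s)].

Definition matching_parity (s : seq cand) : bool :=
  (odd (count_mem cA s) == odd (count_mem cB s)) &&
  (odd (count_mem cB s) == odd (count_mem cC s)).

Definition num_ballot_matching (n : nat) : nat :=
  #|[set w : n.-tuple cand | ballot w && matching_parity w]|.

(* Riordan paths: steps U=(1,1), F=(1,0), D=(1,-1) *)
Inductive step := sU | sF | sD.
Definition step_eqb (x y : step) : bool :=
  match x, y with sU, sU | sF, sF | sD, sD => true | _, _ => false end.
Lemma step_eqP : Equality.axiom step_eqb.
Proof. by case; case; constructor. Qed.
HB.instance Definition _ := hasDecEq.Build step step_eqP.
Definition step_nat (c : step) : nat := match c with sU => 0 | sF => 1 | sD => 2 end.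
Definition nat_step (n : nat) : step := match n with 0 => sU | 1 => sF | _ => sD end.
Lemma step_natK : cancel step_nat nat_step. Proof. by case. Qed.
HB.instance Definition _ := Countable.copy step (can_type step_natK).
Lemma step_enumP : Finite.axiom [:: sU; sF; sD]. Proof. by case. Qed.
HB.instance Definition _ := isFinite.Build step step_enumP.

(* height after the first k steps, as an integer-valued quantity
   #U - #D (we keep it as a pair of nats and compare). *)
(* never below the x-axis: in every prefix #D <= #U;
   ends at height 0: #U = #D overall;
   no flat step on the x-axis: whenever step k+1 is F, the height
   after the first k steps (#U - #D in the prefix) is positive. *)
Definition riordan_path (s : seq step) : bool :=
  [&& [forall k : 'I_(size s).+1, pcount sD k s <= pcount sU k s],
      count_mem sU s == count_mem sD s &
      [forall k : 'I_(size s),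
         (nth sU s k == sF) ==> (pcount sD k s < pcount sU k s)]].

Definition R (n : nat) : nat :=
  #|[set p : n.-tuple step | riordan_path p]|.

From mathcomp Require Import zify.
From mathcomp Require Import all_boot.
Set Implicit Arguments. Unset Strict Implicit. Unset Printing Implicit Defensive.

(* Both sides count walks of a finite automaton: ballot words are walks of the
   state (#A - #B, #B - #C) in the Weyl chamber of sl3 (the letters are the
   weights of the standard representation), Riordan paths are walks of the
   height h.  Restricting sl3 to so3 turns the standard representation into the
   adjoint one, whose tensor rule V(2h) (x) V(2) = V(2h+2) + V(2h) + V(2h-2)
   (just V(2) for h = 0) is exactly the Riordan step rule.  Hence the
   branching multiplicities [branch x y h] intertwine the two one-step transfer
   operators, so counting ballot words weighted by [branch _ _ 0] equals
   counting Riordan paths ending at height 0; and [branch x y 0] is 1 exactly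
   when x and y are even, i.e. when the word has matching parity. *)

Lemma big_tuple_cons (T : finType) n (F : seq T -> nat) :
  \sum_(t : n.+1.-tuple T) F t = \sum_(a : T) \sum_(t : n.-tuple T) F (a :: t).
Proof.
rewrite (partition_big (@thead _ _) xpredT) //=; apply: eq_bigr => a _.
rewrite (reindex (fun t : n.-tuple T => [tuple of a :: t])) /=; last first.
  exists (fun t : n.+1.-tuple T => [tuple of behead t]) => [t _ | t /eqP <-].
    exact: val_inj.
  by rewrite -tuple_eta.
by apply: eq_bigl => t; rewrite theadE eqxx.
Qed.

Lemma big_tuple0 (T : finType) (F : seq T -> nat) :
  \sum_(t : 0.-tuple T) F t = F [::].
Proof.
rewrite (eq_bigr (fun _ => F [::])) => [|t _]; last by rewrite tuple0.
by rewrite sum_nat_const card_tuple expn0 mul1n.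
Qed.

Lemma big_tuple_rcons (T : finType) n (F : seq T -> nat) :
  \sum_(t : n.+1.-tuple T) F t = \sum_(t : n.-tuple T) \sum_(a : T) F (rcons t a).
Proof.
elim: n F => [|n IH] F; rewrite big_tuple_cons.
  rewrite (big_tuple0 (fun t => \sum_(a : T) F (rcons t a))).
  by apply: eq_bigr => a _; rewrite (big_tuple0 (fun t => F (a :: t))).
rewrite (big_tuple_cons _ (fun t => \sum_(a : T) F (rcons t a))).
by apply: eq_bigr => a _; rewrite (IH (fun t => F (a :: t))).
Qed.

Section Walks.

Variables (T : finType) (S : Type) (next : S -> T -> option S) (start : S).

Definition run (w : seq T) : option S :=
  foldl (fun o a => obind (next^~ a) o) (Some start) w.

Lemma run_rcons w a : run (rcons w a) = obind (next^~ a) (run w).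
Proof. exact: foldl_rcons. Qed.

Definition walk_sum n (f : S -> nat) : nat :=
  \sum_(w : n.-tuple T) oapp f 0 (run w).

Definition step_sum (f : S -> nat) (s : S) : nat := \sum_(a : T) oapp f 0 (next s a).

Lemma eq_walk_sum n f g : f =1 g -> walk_sum n f = walk_sum n g.
Proof. by move=> fg; apply: eq_bigr => w _; case: (run w). Qed.

Lemma walk_sum0 f : walk_sum 0 f = f start.
Proof. exact: (big_tuple0 (fun w => oapp f 0 (run w))). Qed.

Lemma walk_sumS n f : walk_sum n.+1 f = walk_sum n (step_sum f).
Proof.
rewrite /walk_sum (big_tuple_rcons _ (fun w => oapp f 0 (run w))); apply: eq_bigr => w _.
under eq_bigr => a _ do rewrite run_rcons.
by case: (run w) => [s|] //=; rewrite big1.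
Qed.

Lemma card_walk n (P : pred (seq T)) (F : pred S) :
  (forall w, P w = oapp F false (run w)) ->
  #|[set w : n.-tuple T | P w]| = walk_sum n F.
Proof.
move=> PF; rewrite -sum1_card big_mkcond; apply: eq_bigr => w _.
by rewrite inE PF; case: (run w) => [s|] /=; case: (F _).
Qed.

End Walks.

Lemma walk_sum_transfer (T1 T2 : finType) (S1 S2 : Type)
    (next1 : S1 -> T1 -> option S1) (start1 : S1)
    (next2 : S2 -> T2 -> option S2) (start2 : S2)
    (L : (S2 -> nat) -> S1 -> nat) :
  (forall f, L f start1 = f start2) ->
  (forall f, step_sum next1 (L f) =1 L (step_sum next2 f)) ->
  forall n f, walk_sum next1 start1 n (L f) = walk_sum next2 start2 n f.
Proof.
move=> L_start L_step; elim=> [|n IH] f; first by rewrite !walk_sum0.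
by rewrite !walk_sumS -IH; apply: eq_walk_sum.
Qed.

Lemma forall_ordSr n (P : nat -> bool) :
  [forall k : 'I_n.+1, P k] = [forall k : 'I_n, P k] && P n.
Proof.
apply/forallP/andP => [P_all | [/forallP P_lt P_n] k].
  split; last exact: (P_all ord_max).
  by apply/forallP => k; exact: (P_all (widen_ord (leqnSn n) k)).
have [lt_kn | ge_kn] := ltnP k n; first exact: (P_lt (Ordinal lt_kn)).
suff -> : nat_of_ord k = n by [].
by apply/eqP; rewrite eqn_leq ge_kn -ltnS ltn_ord.
Qed.

Lemma forall_take_rcons (T : Type) (P : seq T -> bool) s a :
  [forall k : 'I_(size (rcons s a)).+1, P (take k (rcons s a))] =
  [forall k : 'I_(size s).+1, P (take k s)] && P (rcons s a).
Proof.
rewrite size_rcons (forall_ordSr _ (fun k => P (take k (rcons s a)))).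
rewrite take_oversize ?size_rcons //; congr (_ && _).
by apply: eq_forallb => k; rewrite -cats1 takel_cat // -ltnS.
Qed.

Lemma forall_nth_take_rcons (T : Type) (x0 : T) (P : T -> seq T -> bool) s a :
  [forall k : 'I_(size (rcons s a)), P (nth x0 (rcons s a) k) (take k (rcons s a))] =
  [forall k : 'I_(size s), P (nth x0 s k) (take k s)] && P a s.
Proof.
rewrite size_rcons.
rewrite (forall_ordSr _ (fun k => P (nth x0 (rcons s a) k) (take k (rcons s a)))).
rewrite nth_rcons ltnn eqxx -cats1 take_size_cat //; congr (_ && _).
by apply: eq_forallb => k; rewrite cats1 nth_rcons ltn_ord -cats1 takel_cat // ltnW.
Qed.

Lemma count_mem_rcons (T : eqType) (s : seq T) a x :
  count_mem x (rcons s a) = count_mem x s + (a == x).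
Proof. by rewrite -cats1 count_cat /= addn0. Qed.

Definition ballot_next (s : nat * nat) (a : cand) : option (nat * nat) :=
  let: (x, y) := s in
  match a with
  | cA => Some (x.+1, y)
  | cB => if 0 < x then Some (x.-1, y.+1) else None
  | cC => if 0 < y then Some (x, y.-1) else None
  end.

Lemma run_ballot w :
  run ballot_next (0, 0) w =
  if ballot w
  then Some (count_mem cA w - count_mem cB w, count_mem cB w - count_mem cC w)
  else None.
Proof.
elim/last_ind: w => [|w a IH]; first by rewrite /ballot; case: forallP => // -[] [[]].
rewrite run_rcons IH /ballot /pcount.
rewrite (forall_take_rcons
  (fun t => (count_mem cB t <= count_mem cA t) && (count_mem cC t <= count_mem cB t))).
case: forallP => [/(_ ord_max) /= | //].
rewrite take_size !count_mem_rcons.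
set nA := count_mem cA w; set nB := count_mem cB w; set nC := count_mem cC w.
move=> /andP[le_BA le_CB]; case: a => /=; rewrite ?addn0;
  do 2? case: ifP => ?; first [by congr (Some (_, _)); lia | by [] | exfalso; lia].
Qed.

Lemma ballot_matchingE w :
  ballot w && matching_parity w =
  oapp (fun s => ~~ odd s.1 && ~~ odd s.2) false (run ballot_next (0, 0) w).
Proof.
rewrite run_ballot /matching_parity; case: ifP => //= /forallP /(_ ord_max) /=.
rewrite /pcount take_size => /andP[le_BA le_CB].
by rewrite !oddB //; case: (odd (count_mem cA w)); case: (odd _); case: (odd _).
Qed.

Definition ballot_op (g : nat * nat -> nat) (s : nat * nat) : nat :=
  let: (x, y) := s in
  g (x.+1, y) + (if 0 < x then g (x.-1, y.+1) else 0)
  + (if 0 < y then g (x, y.-1) else 0).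

Lemma step_sum_ballot g : step_sum ballot_next g =1 ballot_op g.
Proof.
case=> x y; rewrite /step_sum (bigD1 cA) //= (bigD1 cB) //= (bigD1 cC) //=.
by rewrite big_pred0 => [|[]]; rewrite // addn0 addnA; case: (0 < x); case: (0 < y).
Qed.

Definition riordan_next (h : nat) (a : step) : option nat :=
  match a with
  | sU => Some h.+1
  | sF => if 0 < h then Some h else None
  | sD => if 0 < h then Some h.-1 else None
  end.

Definition riordan_prefix (s : seq step) : bool :=
  [forall k : 'I_(size s).+1, pcount sD k s <= pcount sU k s] &&
  [forall k : 'I_(size s), (nth sU s k == sF) ==> (pcount sD k s < pcount sU k s)].

Lemma run_riordan w :
  run riordan_next 0 w =
  if riordan_prefix w then Some (count_mem sU w - count_mem sD w) else None.
Proof.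
elim/last_ind: w => [|w a IH].
  by rewrite /riordan_prefix; case: forallP => [_|[] [[]]] //; case: forallP => // -[] [].
rewrite run_rcons IH /riordan_prefix /pcount.
rewrite (forall_take_rcons (fun t => count_mem sD t <= count_mem sU t)).
rewrite (forall_nth_take_rcons sU
  (fun b t => (b == sF) ==> (count_mem sD t < count_mem sU t))).
case: forallP => [/(_ ord_max) /= | //]; case: forallP => _; last by rewrite andbF.
rewrite take_size !count_mem_rcons => le_DU.
by case: a => /=; rewrite ?addn0 ?andbT;
  do 2? case: ifP => ?; first [by congr Some; lia | by [] | exfalso; lia].
Qed.

Lemma riordan_pathE w :
  riordan_path w = oapp (fun h => h == 0) false (run riordan_next 0 w).
Proof.
rewrite run_riordan /riordan_path /riordan_prefix.
case: forallP => [/(_ ord_max) /= | //]; rewrite /pcount take_size => le_DU.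
by case: forallP => _; rewrite ?andbF //= andbT subn_eq0 eqn_leq le_DU andbT.
Qed.

Definition riordan_op (f : nat -> nat) (h : nat) : nat :=
  f h.+1 + (if 0 < h then f h + f h.-1 else 0).

Lemma step_sum_riordan f : step_sum riordan_next f =1 riordan_op f.
Proof.
move=> h; rewrite /step_sum (bigD1 sU) //= (bigD1 sF) //= (bigD1 sD) //=.
rewrite big_pred0 => [|[]]; rewrite // addn0 addnA /riordan_op.
by case: (0 < h); rewrite ?addnA ?addn0.
Qed.

(* The Riordan transition matrix is symmetric; truncating the sums at N leaves
   two boundary terms. *)
Lemma riordan_op_sym (v f : nat -> nat) N :
  \sum_(h < N.+1) riordan_op v h * f h + v N * f N.+1 =
  \sum_(h < N.+1) v h * riordan_op f h + v N.+1 * f N.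
Proof.
elim: N => [|N IH]; first by rewrite !big_ord1 /riordan_op /=; lia.
rewrite big_ord_recr [in RHS]big_ord_recr /=.
rewrite [riordan_op v N.+1]/riordan_op [riordan_op f N.+1]/riordan_op /= !mulnDl !mulnDr.
move: IH; set L := \sum_(i < N.+1) _; set R := \sum_(i < N.+1) _; lia.
Qed.

Definition even_below (M h : nat) : bool := (h <= M) && ~~ odd (M - h).

(* Elliott's branching rule for SU(3) > SO(3): the multiplicity of the SO(3)
   irreducible of dimension 2h + 1 in the SU(3) irreducible of highest weight
   (x, y). *)
Fixpoint branch (x y h : nat) : nat :=
  match x with
  | 0 => even_below y h
  | 1 => (0 < h <= y.+1)
  | x'.+2 => branch x' y h + (x'.+2 <= h <= x'.+2 + y)
  end.

Lemma branchSS x y h : branch x.+2 y h = branch x y h + (x.+2 <= h <= x.+2 + y).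
Proof. by []. Qed.

Lemma branch_gt x y h : x + y < h -> branch x y h = 0.
Proof.
elim/ltn_ind: x => -[|[|x]] IH /=; rewrite /even_below; try lia.
move=> lt; rewrite IH //; lia.
Qed.

Lemma branch0 x y : branch x y 0 = ~~ odd x && ~~ odd y.
Proof.
elim/ltn_ind: x => -[|[|x]] IH; last by rewrite branchSS IH //; lia.
all: rewrite /= /even_below; lia.
Qed.

Lemma branch_intertwine x y h :
  ballot_op (fun s => branch s.1 s.2 h) (x, y) = riordan_op (branch x y) h.
Proof.
rewrite /ballot_op /riordan_op.
(* From x to x + 2 both sides change by the same interval indicators. *)
elim/ltn_ind: x y h => -[|[|x]] IH y h.
- case: y => [|y]; case: h => [|h] /=; rewrite /even_below; lia.
- case: y => [|y]; case: h => [|h] /=; rewrite /even_below; lia.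
- have := IH x (ltnW (ltnSn _)) y h.
  case: x IH => [|x] _; case: y => [|y]; case: h => [|h] /=; lia.
Qed.

Definition branch_transform (f : nat -> nat) (s : nat * nat) : nat :=
  \sum_(h < s.1 + s.2 + 1) branch s.1 s.2 h * f h.

Lemma branch_transform_widen f x y N :
  x + y < N -> branch_transform f (x, y) = \sum_(h < N) branch x y h * f h.
Proof.
move=> lt_N; rewrite /branch_transform /=.
rewrite (big_ord_widen N (fun h => branch x y h * f h)) ?addn1 //.
by rewrite big_mkcond; apply: eq_bigr => h _; case: ltnP => // ?; rewrite branch_gt.
Qed.

Lemma step_sum_branch_transform f :
  step_sum ballot_next (branch_transform f) =1 branch_transform (step_sum riordan_next f).
Proof.
case=> x y; set N := x + y + 2; rewrite step_sum_ballot.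
have -> : ballot_op (branch_transform f) (x, y) =
          \sum_(h < N.+1) ballot_op (fun s => branch s.1 s.2 h) (x, y) * f h.
  rewrite /ballot_op; under [RHS]eq_bigr do rewrite !mulnDl.
  rewrite !big_split /=; congr (_ + _ + _).
  - by apply: branch_transform_widen; lia.
  - by case: x @N => [|x] N /=; [rewrite big1 | apply: branch_transform_widen; lia].
  - by case: y @N => [|y] N /=; [rewrite big1 | apply: branch_transform_widen; lia].
under eq_bigr do rewrite branch_intertwine.
have [vanish_N vanish_SN] : branch x y N = 0 /\ branch x y N.+1 = 0.
  by split; apply: branch_gt; lia.
have := riordan_op_sym (branch x y) f N.
rewrite vanish_N vanish_SN !mul0n !addn0 => ->.
rewrite (branch_transform_widen _ (N := N.+1)); last lia.
by apply: eq_bigr => h _; rewrite step_sum_riordan.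
Qed.

Lemma branch_transform_start f : branch_transform f (0, 0) = f 0.
Proof. by rewrite /branch_transform big_ord1 /= mul1n. Qed.

Lemma branch_transform_eq0 s :
  branch_transform (fun h => h == 0) s = ~~ odd s.1 && ~~ odd s.2.
Proof.
rewrite /branch_transform addn1 big_ord_recl /= muln1 branch0 big1 ?addn0 // => h _.
by rewrite muln0.
Qed.

Theorem theorem4p3 (n : nat) : 1 <= n -> num_ballot_matching n = R n.
Proof.
(* The identity holds for n = 0 as well. *)
move=> _.
rewrite /num_ballot_matching (card_walk n ballot_matchingE).
rewrite /R (card_walk n riordan_pathE).
rewrite -(walk_sum_transfer branch_transform_start step_sum_branch_transform).
by apply: eq_walk_sum => s; rewrite branch_transform_eq0.
Qed.
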